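(* Let $m,n\geq2$, let $\mathbf p\in\mathbb R^m$, $\mathbf q\in\mathbb R^n$ be probability vectors with all entries strictly positive, and let $y(\mathbf p,\mathbf q)=(p_1,\dots,p_{m-1},1,q_1,\dots,q_{n-1})^T$. Let $S_1,\dots,S_{C(m,n)}$, $C(m,n)=\binom{mn}{m+n-1}$, be the subsets of $[mn]$ of cardinality $m+n-1$ (in lexicographic order), and $\mathfrak A_k=\mathfrak A(S_k)$. When $\det(\mathfrak A_k)\neq0$ and $\mathfrak A_k^{-1}y(\mathbf p,\mathbf q)\in\mathcal P_{m+n-1}$, let $P_k$ be the $m\times n$ matrix with $(P_k)_{\phi(i_l)}=x_l$ for $S_k=\{i_1<\dots<i_{m+n-1}\}$ and $x=\mathfrak A_k^{-1}y(\mathbf p,\mathbf q)$, and all other entries $0$. Then $$\mathcal C_e(\mathbf p,\mathbf q)=\mathscr C(\mathbf p,\mathbf q)=\{P_k:\det(\mathfrak A_k)\neq0,\ \mathfrak A_k^{-1}y(\mathbf p,\mathbf q)\in\mathcal P_{m+n-1},\ 1\le k\le C(m,n)\}.$$ Moreover, for $H$ a strictly concave function on $\mathcal C(\mathbf p,\mathbf q)$ such as the Shannon, Rényi or Tsallis entropy, setting $H_k=H(P_k)$ if $\det(\mathfrak A_k)\neq0$ and $\mathfrak A_k^{-1}y(\mathbf p,\mathbf q)\in\mathcal P_{m+n-1}$, and $H_k=\infty$ otherwise, one has $$\inf_{P\in\mathcal C(\mathbf p,\mathbf q)}H(P)=\min_{P\in\mathscr C(\mathbf p,\mathbf q)}H(P)=\min\{H_k:1\le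 k\le C(m,n)\}.$$
   Context: $\mathcal P_N$ is the set of probability vectors in $\mathbb R^N$ (nonnegative entries summing to $1$). $\mathcal C(\mathbf p,\mathbf q)$: nonnegative $m\times n$ matrices with row sums $p_i$ and column sums $q_j$; $\mathcal C_e(\mathbf p,\mathbf q)$: its extreme points; $V(P)=\{(i,j):p_{i,j}\neq0\}$. $\mathscr C(\mathbf p,\mathbf q)$: the set of $P\in\mathcal C(\mathbf p,\mathbf q)$ with $V(P)\subset T$ for some tree $T\subset[m]\times[n]$ with $|T|=m+n-1$ (graph notions: distinct points adjacent iff they share a row or column; a circuit is a cyclic sequence of $s\ge4$ pairwise distinct points $v_k=(i_k,j_k)$ with, indices mod $s$, $v_k,v_{k+1}$ adjacent and $(i_{k+2}-i_k)(j_{k+2}-j_k)\ne0$; a tree is a connected subset with no circuit). $\phi(i)=(t,r)$ for $i=(t-1)n+r$, $t\in[m]$, $r\in[n]$. For $S=\{i_1<\dots<i_{m+n-1}\}$, the structure matrix $\mathfrak A(S)=(a_{s,k})$ is the $(m+n-1)\times(m+n-1)$ matrix with, for $\phi(i_k)=(t,r)$: $a_{s,k}=1$ if $s=t<m$; $a_{s,k}=1$ if $s=m$; $a_{s,k}=1$ if $s=m+r<m+n$; $a_{s,k}=0$ otherwise. Rényi entropy $\frac1{1-\alpha}\log\sum p_{i,j}^\alpha$ and Tsallis entropy $\frac1{1-\alpha}(\sum p_{i,j}^\alpha-1)$, $\alpha\ge0$, $\alpha\ne1$. *)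

From HB Require Import structures.
From mathcomp Require Import all_boot all_order all_algebra.
From mathcomp Require Import reals.
Set Implicit Arguments. Unset Strict Implicit. Unset Printing Implicit Defensive.
Import Order.TTheory GRing.Theory Num.Theory.
Local Open Scope ring_scope.

Section TP.
Variable R : realType.

Definition probvec (N : nat) (v : 'I_N -> R) : Prop :=
  (forall i, 0 <= v i) /\ \sum_(i < N) v i = 1.

Variables m n : nat.

Definition transport (p : 'I_m -> R) (q : 'I_n -> R) (P : 'M[R]_(m, n)) : Prop :=
  (forall i j, 0 <= P i j) /\
  (forall i, \sum_(j < n) P i j = p i) /\
  (forall j, \sum_(i < m) P i j = q j).

Definition extreme_transport p q (P : 'M[R]_(m, n)) : Prop :=
  transport p q P /\
  forall A B t, transport p q A -> transport p q B -> 0 < t -> t < 1 ->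
    P = t *: A + (1 - t) *: B -> A = B.

Definition point := ('I_m * 'I_n)%type.

Definition supp (P : 'M[R]_(m, n)) : {set point} :=
  [set v : point | P v.1 v.2 != 0].

Definition adjacent (a b : point) : bool :=
  (a != b) && ((a.1 == b.1) || (a.2 == b.2)).

(* a circuit: cyclic sequence v_0..v_{s-1} of s >= 4 pairwise distinct points
   (indices mod s) with v_k, v_{k+1} adjacent and
   (i_{k+2}-i_k)(j_{k+2}-j_k) <> 0, i.e. i_{k+2} <> i_k and j_{k+2} <> j_k.
   x0 is only a default value for nth (irrelevant since indices are < size c). *)
Definition is_circuit (x0 : point) (c : seq point) : Prop :=
  (4 <= size c)%N /\ uniq c /\
  forall k, (k < size c)%N ->
    adjacent (nth x0 c k) (nth x0 c ((k + 1) %% size c)) /\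
    (nth x0 c ((k + 2) %% size c)).1 != (nth x0 c k).1 /\
    (nth x0 c ((k + 2) %% size c)).2 != (nth x0 c k).2.

Definition connected_set (T : {set point}) : Prop :=
  forall a b, a \in T -> b \in T ->
    connect [rel u v | [&& u \in T, v \in T & adjacent u v]] a b.

Definition is_tree (T : {set point}) : Prop :=
  connected_set T /\
  ~ (exists (x0 : point) (c : seq point), is_circuit x0 c /\ all (mem T) c).

Definition tree_transport p q (P : 'M[R]_(m, n)) : Prop :=
  transport p q P /\
  exists T : {set point}, is_tree T /\ #|T| = (m + n - 1)%N /\ supp P \subset T.

(* phi (0-based): i = t*n + r  |->  (t, r) with t = i %/ n, r = i %% n *)

Definition sth (S : {set 'I_(m * n)}) (k : nat) : nat :=
  nth 0%N (sort leq [seq val x | x <- enum S]) k.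

Definition struct_mx (S : {set 'I_(m * n)}) : 'M[R]_(m + n - 1) :=
  \matrix_(s, k)
    let i := sth S k in
    let t := (i %/ n)%N in
    let r := (i %% n)%N in
    if [|| (s == t :> nat) && (t < m - 1)%N, (s == (m - 1)%N :> nat)
        | (s == (m + r)%N :> nat) && (r < n - 1)%N] then 1 else 0.

Definition oget (N : nat) (f : 'I_N -> R) (i : nat) : R :=
  oapp f 0 (insub i).

Definition yvec (p : 'I_m -> R) (q : 'I_n -> R) : 'cV[R]_(m + n - 1) :=
  \col_s (if (s < m - 1)%N then oget p s
          else if (s == (m - 1)%N :> nat) then 1 else oget q (s - m)%N).

Definition xvec p q (S : {set 'I_(m * n)}) : 'cV[R]_(m + n - 1) :=
  invmx (struct_mx S) *m yvec p q.

Definition admissible p q (S : {set 'I_(m * n)}) : Prop :=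
  #|S| = (m + n - 1)%N /\ \det (struct_mx S) != 0 /\
  probvec (fun k => xvec p q S k ord0).

Definition PS p q (S : {set 'I_(m * n)}) : 'M[R]_(m, n) :=
  \matrix_(i, j) \sum_(k < m + n - 1 | (sth S k %/ n == i)%N && (sth S k %% n == j)%N)
     xvec p q S k ord0.

Definition strictly_concave_on p q (H : 'M[R]_(m, n) -> R) : Prop :=
  forall A B t, transport p q A -> transport p q B -> A != B -> 0 < t -> t < 1 ->
    t * H A + (1 - t) * H B < H (t *: A + (1 - t) *: B).

End TP.

(* The map [margins] sends an m x n matrix to its first m-1 row sums, its total
   mass and its first n-1 column sums; [struct_mx S *m x] is the margins vector
   of [x] spread on the cells of [S], so [P_S] is the matrix carried by those
   cells with margins [y(p,q)], and [det A(S) <> 0] says that the cells of [S]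
   are independent: no nonzero balanced matrix (zero row and column sums) lives
   on them.

   Independence is the absence of circuits.  The alternating +1/-1 matrix along
   a circuit is balanced; conversely every row and column met by the support of
   a nonzero balanced matrix contains two of its cells, so walking alternately
   along columns and rows closes a circuit.  A nonsingular [A(S)] also makes its
   cells connected: the indicators of the rows and of the columns met by a
   component give a potential u_i - v_j vanishing on [S], hence everywhere.

   A transport plan is extreme iff its support is independent: a balanced
   perturbation carried by [supp P], pushed both ways until an entry vanishes,
   writes [P] as a proper convex combination of two plans with smaller support.
   Independent supports extend to m+n-1 independent cells, giving [P = P_S].
   The same splitting lowers a strictly concave [H] while shrinking the support,
   so [H] attains its infimum over the polytope at some [P_S]. *)

From HB Require Import structures.
From mathcomp Require Import all_boot all_order all_algebra.
From mathcomp Require Import boolp reals.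
From mathcomp Require Import zify ring lra.
Import Order.TTheory GRing.Theory Num.Theory.
Local Open Scope ring_scope.
Set Implicit Arguments. Unset Strict Implicit. Unset Printing Implicit Defensive.

Lemma mod_addl_inj s k d e :
  ((k + d) %% s = (k + e) %% s)%N -> (d < s)%N -> (e < s)%N -> d = e.
Proof.
by move=> /eqP; rewrite eqn_modDl => /eqP Hde Hd He; rewrite -(modn_small Hd) -(modn_small He).
Qed.

Lemma sum_rot (V : nmodType) s (f : nat -> V) : (0 < s)%N ->
  \sum_(k < s) f k = \sum_(k < s) f ((k + 1) %% s)%N.
Proof.
case: s => // s _; rewrite big_ord_recl big_ord_recr /= addn1 modnn addrC.
congr (_ + _); apply: eq_bigr => k _.
by rewrite /bump /= add1n addn1 modn_small // ltnS ltn_ord.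
Qed.

Lemma eq_from_sum_init (V : zmodType) K (f g : 'I_K -> V) :
  \sum_i f i = \sum_i g i -> (forall i : 'I_K, (i < K.-1)%N -> f i = g i) -> f =1 g.
Proof.
move=> Hsum Hinit i; case: (ltnP i K.-1) => Hi; first exact: Hinit.
move: Hsum; rewrite (bigD1 i) //= (bigD1 i (P := predT)) //= (eq_bigr g) => [|l Hl].
  by move/addIr.
by apply: Hinit; have := ltn_ord l; have := ltn_ord i; have : (l : nat) != i by []; lia.
Qed.

Lemma sum0_other_neq0 (V : zmodType) (I : finType) (f : I -> V) x :
  \sum_i f i = 0 -> f x != 0 -> exists2 y, y != x & f y != 0.
Proof.
rewrite (bigD1 x) //= => Hsum Hx.
have [y /andP [Hy Hfy] | Hno] := pickP (fun y => (y != x) && (f y != 0)); first by exists y.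
have Hrest : \sum_(y | y != x) f y = 0.
  by apply: big1 => y Hy; move: (Hno y); rewrite Hy /= => /negbFE/eqP.
by rewrite Hrest addr0 in Hsum; rewrite Hsum eqxx in Hx.
Qed.

Lemma sum0_exists_neg (R : realDomainType) (I : finType) (f : I -> R) x :
  \sum_i f i = 0 -> f x != 0 -> exists y, f y < 0.
Proof.
move=> Hsum Hx; apply/existsP; apply: contraNT Hx; rewrite negb_exists => /forallP Hge.
have Hf0 i : 0 <= f i by rewrite leNgt Hge.
by apply/eqP; apply: (psumr_eq0P (P := predT)) => // i _.
Qed.

Lemma exists_argmin (R : realDomainType) (I : finType) (P : I -> Prop) (f : I -> R) :
  (exists x, P x) -> exists x, P x /\ forall y, P y -> f x <= f y.
Proof.
case=> x0 Px0; have Px0b : `[< P x0 >] by apply/asboolP.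
case: (@arg_minP _ _ _ x0 (fun x => `[< P x >]) f Px0b) => x /asboolP Px Hmin.
exists x; split => // y Py.
by apply: Hmin; apply/asboolP.
Qed.

Lemma first_repeat (T : finType) (v : nat -> T) :
  exists a b, [/\ (a < b)%N, v a = v b & forall i j, (i < j < b)%N -> v i != v j].
Proof.
pose P b := [exists a : 'I_b, v a == v b].
have exP : exists b, P b.
  pose K := #|T|.+1.
  have : [exists i : 'I_K, exists j : 'I_K, (i < j)%N && (v i == v j)].
    apply: contraT; rewrite negb_exists => /forallP Hno.
    suff Hinj : injective (fun i : 'I_K => v i).
      by have := leq_card _ Hinj; rewrite card_ord ltnn.
    move=> i j Hij; apply/val_inj; case: (ltngtP i j) => // H; exfalso.
      by have := Hno i; rewrite negb_exists => /forallP/(_ j); rewrite H Hij eqxx.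
    by have := Hno j; rewrite negb_exists => /forallP/(_ i); rewrite H Hij eqxx.
  case/existsP => i /existsP [j /andP [lt_ij /eqP Hv]].
  by exists j; apply/existsP; exists (Ordinal lt_ij); apply/eqP.
case: (ex_minnP exP) => b /existsP [a /eqP Hab] Hmin.
exists a, b; split=> [||i j /andP [Hij Hjb]]; [exact: ltn_ord | exact: Hab | apply/negP => /eqP Hv].
have : P j by apply/existsP; exists (Ordinal Hij); apply/eqP.
by move/Hmin; rewrite leqNgt Hjb.
Qed.

Lemma det_col0 (F : comNzRingType) d (A : 'M[F]_d) j0 : (forall i, A i j0 = 0) -> \det A = 0.
Proof.
by move=> H; rewrite -det_tr (expand_det_row _ j0) big1 // => i _; rewrite mxE H mul0r.
Qed.

Lemma exists_common_annihilator (F : fieldType) d K (f : 'I_K -> 'cV[F]_d) :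
  (K < d)%N -> exists2 g : 'rV[F]_d, g != 0 & forall l, g *m f l = 0.
Proof.
move=> HK.
(* pad the K columns with zero columns into a singular square matrix *)
pose M : 'M[F]_d := \matrix_(s, l) (if insub (val l) is Some l' then f l' s 0 else 0).
have Hlast : (d.-1 < d)%N by lia.
have : \det M == 0.
  apply/eqP; apply: (det_col0 (j0 := Ordinal Hlast)) => i.
  by rewrite mxE /= insubF //; apply/negbTE; rewrite -leqNgt; lia.
case/det0P => g Hg HgM; exists g => // l.
apply/matrixP => a b; rewrite (ord1 a) (ord1 b) [RHS]mxE.
have Hl : (l < d)%N by have := ltn_ord l; lia.
have := congr1 (fun A : 'rV[F]_d => A ord0 (Ordinal Hl)) HgM; rewrite /= [RHS]mxE.
apply: eq_trans; rewrite !mxE; apply: eq_bigr => s _; by rewrite mxE /= valK.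
Qed.

Lemma exists_linear_dependence (F : fieldType) d K (f : 'I_K -> 'cV[F]_d) :
  (d < K)%N -> exists a : 'I_K -> F, (exists l, a l != 0) /\ \sum_l a l *: f l = 0.
Proof.
move=> HK.
pose M : 'M[F]_K := \matrix_(l, s) (if insub (val s) is Some s' then f l s' 0 else 0).
have : \det M == 0.
  by apply/eqP; apply: (det_col0 (j0 := Ordinal HK)) => i; rewrite mxE /= insubF // ltnn.
case/det0P => v Hv HvM; exists (fun l => v 0 l); split.
  by have /matrix0Pn [i [l Hl]] := Hv; exists l; rewrite (ord1 i) in Hl.
apply/matrixP => s b; rewrite (ord1 b) [RHS]mxE summxE.
have Hs : (s < K)%N by have := ltn_ord s; lia.
have := congr1 (fun A : 'rV[F]_K => A ord0 (Ordinal Hs)) HvM; rewrite /= [RHS]mxE.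
apply: eq_trans; rewrite mxE; apply: eq_bigr => l _; by rewrite !mxE /= valK.
Qed.

Section TransportPolytope.
Variable R : realType.
Variables m n : nat.
Hypotheses (m2 : (2 <= m)%N) (n2 : (2 <= n)%N).

Local Notation N := (m + n - 1)%N.
Local Notation cell := (point m n).
Implicit Types (w A B P : 'M[R]_(m, n)) (T : {set cell}) (S : {set 'I_(m * n)}).
Implicit Types (p : 'I_m -> R) (q : 'I_n -> R).

Definition row_sum w i := \sum_(j < n) w i j.
Definition col_sum w j := \sum_(i < m) w i j.

Definition balanced w := (forall i, row_sum w i = 0) /\ (forall j, col_sum w j = 0).

Definition independent T := forall w, supp w \subset T -> balanced w -> w = 0.

Lemma row_sumD A B i : row_sum (A + B) i = row_sum A i + row_sum B i.
Proof. by rewrite -big_split; apply: eq_bigr => j _; rewrite mxE. Qed.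
Lemma col_sumD A B j : col_sum (A + B) j = col_sum A j + col_sum B j.
Proof. by rewrite -big_split; apply: eq_bigr => i _; rewrite mxE. Qed.
Lemma row_sumZ a A i : row_sum (a *: A) i = a * row_sum A i.
Proof. by rewrite mulr_sumr; apply: eq_bigr => j _; rewrite mxE. Qed.
Lemma col_sumZ a A j : col_sum (a *: A) j = a * col_sum A j.
Proof. by rewrite mulr_sumr; apply: eq_bigr => i _; rewrite mxE. Qed.

Lemma balancedZ a w : balanced w -> balanced (a *: w).
Proof. by case=> Hr Hc; split=> [i|j]; rewrite (row_sumZ, col_sumZ) (Hr, Hc) mulr0. Qed.

Lemma transport_add_balanced p q P w : transport p q P -> balanced w ->
  (forall i j, 0 <= P i j + w i j) -> transport p q (P + w).
Proof.
move=> [_ [HPr HPc]] [Hr Hc] Hge; split; last split.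
- by move=> i j; rewrite mxE.
- by move=> i; rewrite -/(row_sum _ i) row_sumD Hr addr0; apply: HPr.
- by move=> j; rewrite -/(col_sum _ j) col_sumD Hc addr0; apply: HPc.
Qed.

Lemma supp_sub_cells w T : supp w \subset T -> forall c, c \notin T -> w c.1 c.2 = 0.
Proof.
by move=> HwT c HcT; apply/eqP; apply: contraNT HcT => Hw; apply: (subsetP HwT); rewrite inE.
Qed.

Lemma independent_eq T A B : independent T -> supp A \subset T -> supp B \subset T ->
  row_sum A =1 row_sum B -> col_sum A =1 col_sum B -> A = B.
Proof.
move=> Hind HA HB Hr Hc; apply/eqP; rewrite -subr_eq0; apply/eqP/Hind.
  apply/subsetP => c; rewrite inE !mxE; apply: contraR => HcT.
  by rewrite !(supp_sub_cells _ HcT) // subrr.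
split=> [i|j]; rewrite (row_sumD, col_sumD) -scaleN1r (row_sumZ, col_sumZ).
  by rewrite Hr mulN1r subrr.
by rewrite Hc mulN1r subrr.
Qed.

Definition struct_entry (s i j : nat) : bool :=
  [|| (s == i) && (i < m - 1)%N, s == (m - 1)%N | (s == (m + j)%N) && (j < n - 1)%N].

Definition struct_col (i j : nat) : 'cV[R]_N := \col_s (struct_entry s i j)%:R.

Lemma struct_mxE S s k :
  struct_mx R S s k = struct_col (sth S k %/ n) (sth S k %% n) s 0.
Proof. by rewrite !mxE /struct_entry; case: ifP. Qed.

Definition margins w : 'cV[R]_N := \sum_(c : cell) w c.1 c.2 *: struct_col c.1 c.2.

Lemma sum_eq_oget K (f : 'I_K -> R) a : \sum_(i < K) ((i : nat) == a)%:R * f i = oget f a.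
Proof.
rewrite /oget; case: insubP => [i0 _ <-|Ha] /=.
  rewrite (bigD1 i0) //= eqxx mul1r big1 ?addr0 // => i Hi.
  by rewrite (inj_eq val_inj) (negbTE Hi) mul0r.
rewrite big1 // => i _; case: eqP => [Ei|]; last by rewrite mul0r.
by move: Ha; rewrite -Ei ltn_ord.
Qed.

Lemma oget_ord K (f : 'I_K -> R) (i : 'I_K) : oget f i = f i.
Proof. by rewrite /oget valK. Qed.

Lemma marginsE w (s : 'I_N) : margins w s 0 =
  if (s < m - 1)%N then oget (row_sum w) s
  else if (s == (m - 1)%N :> nat) then \sum_i row_sum w i
  else oget (col_sum w) (s - m)%N.
Proof.
have -> : margins w s 0 = \sum_i \sum_j w i j * (struct_entry s i j)%:R.
  by rewrite summxE pair_bigA; apply: eq_bigr => c _; rewrite !mxE.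
have := ltn_ord s; case: (ltnP s (m - 1)) => [lt_s|le_s] lt_sN.
  rewrite -sum_eq_oget; apply: eq_bigr => i _; rewrite mulr_sumr; apply: eq_bigr => j _.
  have -> : struct_entry s i j = ((i : nat) == s) by apply/idP/idP; rewrite /struct_entry; lia.
  by rewrite mulrC.
case: eqVneq => [eq_s|ne_s].
  by apply: eq_bigr => i _; apply: eq_bigr => j _; rewrite /struct_entry eq_s eqxx orbT mulr1.
rewrite exchange_big -sum_eq_oget; apply: eq_bigr => j _; rewrite mulr_sumr; apply: eq_bigr => i _.
have -> : struct_entry s i j = ((j : nat) == (s - m)%N).
  by have := ltn_ord i; have := ltn_ord j; move=> *; apply/idP/idP; rewrite /struct_entry; lia.
by rewrite mulrC.
Qed.

Lemma oget_ext K (f g : 'I_K -> R) a : f =1 g -> oget f a = oget g a.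
Proof. by move=> Hfg; rewrite /oget; case: insub => //= i. Qed.

Lemma sum_col_sum w : \sum_j col_sum w j = \sum_i row_sum w i.
Proof. exact: exchange_big. Qed.

Lemma margins_eq A B :
  margins A = margins B <-> row_sum A =1 row_sum B /\ col_sum A =1 col_sum B.
Proof.
split=> [HAB|[Hr Hc]]; last first.
  apply/matrixP => s k; rewrite (ord1 k) !marginsE.
  by rewrite (oget_ext _ Hr) (oget_ext _ Hc) (eq_bigr _ (fun i _ => Hr i)).
have coord s (Hs : (s < N)%N) := congr1 (fun M : 'cV[R]_N => M (Ordinal Hs) 0) HAB.
have Htot : \sum_i row_sum A i = \sum_i row_sum B i.
  have Hs : (m - 1 < N)%N by lia.
  by have := coord _ Hs; rewrite !marginsE /= ltnn eqxx.
split.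
  apply: eq_from_sum_init => // i Hi.
  have Hs : (i < N)%N by lia.
  have Hi' : (i < m - 1)%N by lia.
  by have := coord _ Hs; rewrite !marginsE /= Hi' !oget_ord.
apply: eq_from_sum_init => [|j Hj]; first by rewrite !sum_col_sum.
have Hs : (m + j < N)%N by lia.
have E : (m + j - m)%N = j by lia.
have Hs1 : (m + j < m - 1)%N = false by lia.
have Hs2 : (m + j == m - 1)%N = false by lia.
by have := coord _ Hs; rewrite !marginsE /= Hs1 Hs2 E !oget_ord.
Qed.

Lemma margins_eq0 w : margins w = 0 <-> balanced w.
Proof.
have margins0 : margins 0 = 0 by rewrite /margins big1 // => c _; rewrite mxE scale0r.
have row_sum0 i : row_sum 0 i = 0 by rewrite /row_sum big1 // => j _; rewrite mxE.
have col_sum0 j : col_sum 0 j = 0 by rewrite /col_sum big1 // => i _; rewrite mxE.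
rewrite -margins0 margins_eq /balanced.
by split=> [] [Hr Hc]; split=> x; rewrite ?Hr ?Hc ?row_sum0 ?col_sum0 // -?Hr -?Hc.
Qed.

Definition prod_coupling (p : 'I_m -> R) (q : 'I_n -> R) : 'M[R]_(m, n) :=
  \matrix_(i, j) (p i * q j).

Lemma prod_coupling_sums p q : \sum_i p i = 1 -> \sum_j q j = 1 ->
  row_sum (prod_coupling p q) =1 p /\ col_sum (prod_coupling p q) =1 q.
Proof.
move=> Hp Hq; split=> [i|j].
  by rewrite /row_sum (eq_bigr (fun j => p i * q j)) => [|j _]; rewrite ?mxE // -mulr_sumr Hq mulr1.
by rewrite /col_sum (eq_bigr (fun i => p i * q j)) => [|i _]; rewrite ?mxE // -mulr_suml Hp mul1r.
Qed.

Lemma prod_coupling_transport p q : probvec p -> probvec q -> transport p q (prod_coupling p q).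
Proof.
move=> [Hp0 Hp] [Hq0 Hq]; have [Hr Hc] := prod_coupling_sums Hp Hq.
by split; [move=> i j; rewrite mxE mulr_ge0 | split].
Qed.

Lemma margins_yvec p q w : \sum_i p i = 1 -> \sum_j q j = 1 ->
  margins w = yvec p q <-> row_sum w =1 p /\ col_sum w =1 q.
Proof.
move=> Hp Hq; have [Hr Hc] := prod_coupling_sums Hp Hq.
suff -> : yvec p q = margins (prod_coupling p q).
  rewrite margins_eq; split=> [] [Hwr Hwc]; split=> x; by rewrite ?Hwr ?Hwc ?Hr ?Hc.
apply/matrixP => s k; rewrite (ord1 k) marginsE mxE (oget_ext _ Hr) (oget_ext _ Hc).
by rewrite (eq_bigr _ (fun i _ => Hr i)) Hp.
Qed.

Section Place.
Variables (I : finType) (a : I -> R) (ph : I -> cell).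

Definition place : 'M[R]_(m, n) := \matrix_(i, j) \sum_l a l * (ph l == (i, j))%:R.

Lemma row_sum_place i : row_sum place i = \sum_l a l * ((ph l).1 == i)%:R.
Proof.
rewrite /row_sum (eq_bigr (fun j => \sum_l a l * (ph l == (i, j))%:R)) => [|j _]; last first.
  by rewrite mxE.
rewrite exchange_big; apply: eq_bigr => l _; rewrite -mulr_sumr; congr (_ * _).
case: (ph l) => i' j' /=; case: eqVneq => [->|ne_i]; last first.
  by rewrite big1 // => j _; rewrite xpair_eqE (negbTE ne_i).
rewrite (bigD1 j') //= eqxx big1 ?addr0 // => j ne_j.
by rewrite xpair_eqE eqxx eq_sym (negbTE ne_j).
Qed.

Lemma col_sum_place j : col_sum place j = \sum_l a l * ((ph l).2 == j)%:R.
Proof.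
rewrite /col_sum (eq_bigr (fun i => \sum_l a l * (ph l == (i, j))%:R)) => [|i _]; last first.
  by rewrite mxE.
rewrite exchange_big; apply: eq_bigr => l _; rewrite -mulr_sumr; congr (_ * _).
case: (ph l) => i' j' /=; case: eqVneq => [->|ne_j]; last first.
  by rewrite big1 // => i _; rewrite xpair_eqE (negbTE ne_j) andbF.
rewrite (bigD1 i') //= eqxx big1 ?addr0 // => i ne_i.
by rewrite xpair_eqE eq_sym (negbTE ne_i).
Qed.

Lemma sum_row_sum_place : \sum_i row_sum place i = \sum_l a l.
Proof.
under eq_bigr do rewrite row_sum_place.
rewrite exchange_big; apply: eq_bigr => l _; rewrite -mulr_sumr (bigD1 (ph l).1) //= eqxx.
by rewrite big1 ?addr0 ?mulr1 // => i ne_i; rewrite eq_sym (negbTE ne_i).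
Qed.

Lemma margins_place : margins place = \sum_l a l *: struct_col (ph l).1 (ph l).2.
Proof.
rewrite /margins (eq_bigr (fun c => (\sum_l a l * (ph l == c)%:R) *: struct_col c.1 c.2)).
  under eq_bigr do rewrite scaler_suml.
  rewrite exchange_big; apply: eq_bigr => l _.
  rewrite (bigD1 (ph l)) //= eqxx mulr1 big1 ?addr0 // => c ne_c.
  by rewrite eq_sym (negbTE ne_c) mulr0 scale0r.
by move=> c _; rewrite mxE -surjective_pairing.
Qed.

Lemma place_at l : injective ph -> place (ph l).1 (ph l).2 = a l.
Proof.
move=> ph_inj; rewrite mxE -surjective_pairing (bigD1 l) //= eqxx mulr1 big1 ?addr0 // => l' ne_l.
by rewrite (inj_eq ph_inj) (negbTE ne_l) mulr0.
Qed.

Lemma supp_place T : (forall l, ph l \in T) -> supp place \subset T.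
Proof.
move=> HT; apply/subsetP => c; rewrite inE mxE; apply: contraR => HcT.
rewrite big1 // => l _; case: eqVneq => [Hl|]; last by rewrite mulr0.
have Hc : ph l = c by rewrite Hl -surjective_pairing.
by rewrite -Hc HT in HcT.
Qed.

End Place.

Definition pairing (g : 'rV[R]_N) (i j : nat) : R := (g *m struct_col i j) 0 0.

Lemma pairingE g i j : pairing g i j =
  ((if (i < m - 1)%N then oget (g 0) i else 0) + oget (g 0) (m - 1)) +
  (if (j < n - 1)%N then oget (g 0) (m + j) else 0).
Proof.
have pick (a : nat) (b : bool) :
    \sum_(s < N) g 0 s * (((s : nat) == a) && b)%:R = if b then oget (g 0) a else 0.
  case: b; last by rewrite big1 // => s _; rewrite andbF mulr0.
  by rewrite -sum_eq_oget; apply: eq_bigr => s _; rewrite andbT mulrC.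
rewrite /pairing mxE -!pick -sum_eq_oget -!big_split; apply: eq_bigr => s _ /=.
rewrite mxE [_%:R * _]mulrC -!mulrDr /struct_entry; congr (_ * _).
case: (eqVneq (s : nat) i) => [->|?] /=; case: (ltnP i (m - 1)) => ? /=;
  case: (eqVneq _ (m - 1)%N) => ? /=; case: (eqVneq _ (m + j)%N) => ? /=;
  case: (ltnP j (n - 1)) => ? /=; rewrite ?add0r ?addr0 //; lia.
Qed.

Lemma pairing_eq0 g : (forall i j, (i < m)%N -> (j < n)%N -> pairing g i j = 0) -> g = 0.
Proof.
move=> Hg.
have g_mid : oget (g 0) (m - 1) = 0.
  by have := Hg (m - 1)%N (n - 1)%N; rewrite pairingE !ltnn addr0 add0r; apply; lia.
apply/matrixP => a s; rewrite (ord1 a) mxE -[g 0 s]oget_ord.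
case: (ltnP s (m - 1)) => lt_s.
  by have := Hg s (n - 1)%N; rewrite pairingE lt_s g_mid ltnn !addr0; apply; lia.
have [->//|ne_s] := eqVneq (s : nat) (m - 1)%N.
have Hj : (s - m < n - 1)%N by have := ltn_ord s; lia.
have Es : (m + (s - m))%N = s by lia.
by have := Hg (m - 1)%N (s - m)%N; rewrite pairingE ltnn g_mid add0r Hj Es add0r; apply; lia.
Qed.

Lemma balanced_potential w (u v : nat -> R) :
  balanced w -> \sum_i \sum_j w i j * (u i + v j) = 0.
Proof.
move=> [Hr Hc]; under eq_bigr do rewrite (eq_bigr _ (fun j _ => mulrDr _ _ _)) big_split /=.
rewrite big_split /= [X in X + _]big1 => [|i _]; last first.
  by rewrite -mulr_suml; have := Hr i; rewrite /row_sum => ->; rewrite mul0r.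
rewrite add0r exchange_big big1 // => j _.
by rewrite -mulr_suml; have := Hc j; rewrite /col_sum => ->; rewrite mul0r.
Qed.

Definition potential (u v : nat -> R) : 'rV[R]_N :=
  \row_s (if (s < m - 1)%N then u s - u (m - 1)%N
          else if (s == (m - 1)%N :> nat) then u (m - 1)%N + v (n - 1)%N
          else v (s - m)%N - v (n - 1)%N).

Lemma pairing_potential u v i j : (i < m)%N -> (j < n)%N ->
  pairing (potential u v) i j = u i + v j.
Proof.
move=> Hi Hj; rewrite pairingE.
have oget_pot a : (a < N)%N -> oget (potential u v 0) a =
    if (a < m - 1)%N then u a - u (m - 1)%N
    else if a == (m - 1)%N then u (m - 1)%N + v (n - 1)%N else v (a - m)%N - v (n - 1)%N.
  by move=> Ha; rewrite /oget insubT /= mxE.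
have -> : oget (potential u v 0) (m - 1) = u (m - 1)%N + v (n - 1)%N.
  by rewrite oget_pot ?ltnn ?eqxx //; lia.
case: (ltnP i (m - 1)) => Hi'; case: (ltnP j (n - 1)) => Hj'.
- rewrite !oget_pot; try lia.
  have -> : (m + j < m - 1)%N = false by lia.
  have -> : (m + j == m - 1)%N = false by lia.
  have -> : (m + j - m)%N = j by lia.
  by rewrite Hi'; ring.
- rewrite oget_pot; last lia.
  have -> : j = (n - 1)%N by lia.
  by rewrite Hi'; ring.
- rewrite oget_pot; last lia.
  have -> : (m + j < m - 1)%N = false by lia.
  have -> : (m + j == m - 1)%N = false by lia.
  have -> : (m + j - m)%N = j by lia.
  have -> : i = (m - 1)%N by lia.
  by ring.
- have -> : i = (m - 1)%N by lia.
  have -> : j = (n - 1)%N by lia.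
  by ring.
Qed.

Definition sorted_codes S := sort leq [seq val x | x <- enum S].

Lemma size_sorted_codes S : size (sorted_codes S) = #|S|.
Proof. by rewrite size_sort size_map cardE. Qed.

Lemma mem_sorted_codes S (a : nat) :
  (a \in sorted_codes S) = (if insub a is Some x then x \in S else false).
Proof.
rewrite mem_sort; case: insubP => [x _ <-|Ha]; first by rewrite (mem_map val_inj) mem_enum.
by apply/negbTE/mapP => [[x _ Ex]]; move: Ha; rewrite Ex ltn_ord.
Qed.

Lemma sth_lt S k : (sth S k < m * n)%N.
Proof.
case: (ltnP k (size (sorted_codes S))) => Hk; last first.
  by rewrite /sth nth_default // muln_gt0; apply/andP; split; lia.
by have := mem_nth 0%N Hk; rewrite mem_sorted_codes; case: insubP => // x _ <- _.
Qed.

Definition sth_ord S k : 'I_(m * n) := Ordinal (sth_lt S k).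

Lemma sth_ord_in S k : (k < #|S|)%N -> sth_ord S k \in S.
Proof.
rewrite -size_sorted_codes => /(mem_nth 0%N); rewrite mem_sorted_codes.
by case: insubP => [y _ Ey|]; [congr (_ \in S); apply: val_inj | rewrite /= sth_lt].
Qed.

Lemma sth_inj S k1 k2 : (k1 < #|S|)%N -> (k2 < #|S|)%N -> sth S k1 = sth S k2 -> k1 = k2.
Proof.
rewrite -size_sorted_codes => H1 H2 E; apply/eqP.
rewrite -(nth_uniq 0%N H1 H2); first exact/eqP.
by rewrite sort_uniq map_inj_uniq ?enum_uniq //; apply: val_inj.
Qed.

Lemma sth_surj S x : x \in S -> exists2 k, (k < #|S|)%N & sth_ord S k = x.
Proof.
move=> Hx; have Hmem : val x \in sorted_codes S by rewrite mem_sorted_codes valK.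
exists (index (val x) (sorted_codes S)); first by rewrite -size_sorted_codes index_mem.
by apply: val_inj; rewrite /= /sth nth_index.
Qed.

Lemma code_lt (c : cell) : (c.1 * n + c.2 < m * n)%N.
Proof.
have lt_c : (c.1 * n + c.2 < c.1.+1 * n)%N by rewrite mulSn addnC ltn_add2r.
by apply: leq_trans lt_c _; rewrite leq_mul2r ltn_ord orbT.
Qed.

Definition code (c : cell) : 'I_(m * n) := Ordinal (code_lt c).

Lemma decode_lt1 (x : 'I_(m * n)) : (x %/ n < m)%N.
Proof. by rewrite ltn_divLR ?ltn_ord //; lia. Qed.

Lemma decode_lt2 (x : 'I_(m * n)) : (x %% n < n)%N.
Proof. by rewrite ltn_mod; lia. Qed.

Definition decode (x : 'I_(m * n)) : cell := (Ordinal (decode_lt1 x), Ordinal (decode_lt2 x)).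

Lemma decodeK : cancel decode code.
Proof. by move=> x; apply: val_inj; rewrite /= -divn_eq. Qed.

Lemma codeK : cancel code decode.
Proof.
have n0 : (0 < n)%N by lia.
case=> i j; congr pair; apply: val_inj => /=.
  by rewrite divnMDl // divn_small ?addn0.
by rewrite modnMDl modn_small.
Qed.

Definition cells S : {set cell} := [set c | code c \in S].
Definition codes T : {set 'I_(m * n)} := code @: T.

Lemma cells_codes T : cells (codes T) = T.
Proof. by apply/setP => c; rewrite inE mem_imset //; apply: can_inj codeK. Qed.

Lemma card_codes T : #|codes T| = #|T|.
Proof. by rewrite card_imset //; apply: can_inj codeK. Qed.

Lemma card_cells S : #|cells S| = #|S|.
Proof.
have -> : cells S = decode @: S.
  apply/setP => c; rewrite inE; apply/idP/imsetP => [Hc|[x Hx ->]]; last by rewrite decodeK.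
  by exists (code c); rewrite ?codeK.
by rewrite card_imset //; apply: can_inj decodeK.
Qed.

Definition sth_cell S (k : 'I_N) : cell := decode (sth_ord S k).

Section CardN.
Variable S : {set 'I_(m * n)}.
Hypothesis card_S : #|S| = N.

Lemma sth_cell_in k : sth_cell S k \in cells S.
Proof. by rewrite inE decodeK sth_ord_in // card_S. Qed.

Lemma sth_cell_inj : injective (sth_cell S).
Proof.
move=> k1 k2 /(congr1 code); rewrite !decodeK => /(congr1 val) /= E.
by apply: val_inj; apply: (sth_inj (S := S)) E; rewrite card_S.
Qed.

Lemma sth_cell_surj c : c \in cells S -> exists k, sth_cell S k = c.
Proof.
rewrite inE => /sth_surj [k]; rewrite card_S => Hk Ek.
by exists (Ordinal Hk); rewrite /sth_cell /= Ek codeK.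
Qed.

End CardN.

Definition embed S (x : 'cV[R]_N) : 'M[R]_(m, n) :=
  \matrix_(i, j) \sum_(k < N | (sth S k %/ n == i)%N && (sth S k %% n == j)%N) x k ord0.

Lemma embed_place S x : embed S x = place (fun k => x k ord0) (sth_cell S).
Proof.
apply/matrixP => i j; rewrite !mxE big_mkcond; apply: eq_bigr => k _.
by rewrite xpair_eqE -!val_eqE /=; case: (_ && _); rewrite ?mulr1 ?mulr0.
Qed.

Lemma struct_mx_mul S x : struct_mx R S *m x = margins (embed S x).
Proof.
rewrite embed_place margins_place; apply/matrixP => s a; rewrite (ord1 a) mxE summxE.
by apply: eq_bigr => k _; rewrite struct_mxE !mxE mulrC.
Qed.

Lemma supp_embed S x : #|S| = N -> supp (embed S x) \subset cells S.
Proof. by move=> card_S; rewrite embed_place; apply: supp_place => k; apply: sth_cell_in. Qed.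

Lemma embed_at S x k : #|S| = N -> embed S x (sth_cell S k).1 (sth_cell S k).2 = x k ord0.
Proof. by move=> card_S; rewrite embed_place place_at //; apply: sth_cell_inj. Qed.

Lemma embed_restrict S w : #|S| = N -> supp w \subset cells S ->
  embed S (\col_k w (sth_cell S k).1 (sth_cell S k).2) = w.
Proof.
move=> card_S HwS; apply/matrixP => i j.
have [Hin|Hout] := boolP ((i, j) \in cells S).
  have [k Ek] := sth_cell_surj card_S Hin.
  by rewrite -[i]/((i, j).1) -[j]/((i, j).2) -Ek embed_at // mxE.
rewrite (supp_sub_cells HwS Hout) (supp_sub_cells (supp_embed _ card_S) Hout) //.
Qed.

Lemma det_neq0_independent S : #|S| = N ->
  \det (struct_mx R S) != 0 <-> independent (cells S).
Proof.
move=> card_S; split=> [Hdet w HwS Hw | Hind].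
  have unit_A : struct_mx R S \in unitmx by rewrite unitmxE unitfE.
  set x := \col_k w (sth_cell S k).1 (sth_cell S k).2; have Ax : struct_mx R S *m x = 0.
    by rewrite struct_mx_mul embed_restrict //; apply/margins_eq0.
  have x0 : x = 0 by rewrite -(mulKmx unit_A x) Ax mulmx0.
  rewrite -(embed_restrict card_S HwS) -/x x0.
  by apply/matrixP => i j; rewrite !mxE big1 // => k _; rewrite mxE.
apply/negP => /eqP Hdet; have : \det (struct_mx R S)^T == 0 by rewrite det_tr Hdet.
case/det0P => v Hv0 Hv; set x := v^T.
have Ax : struct_mx R S *m x = 0 by rewrite -[struct_mx R S]trmxK -trmx_mul Hv trmx0.
have Hembed : embed S x = 0.
  by apply: Hind; [apply: supp_embed | apply/margins_eq0; rewrite -struct_mx_mul].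
move/eqP: Hv0; apply; rewrite -[v]trmxK -/x; apply/matrixP => a k.
by rewrite (ord1 a) [LHS]mxE -(embed_at x k card_S) Hembed !mxE.
Qed.

Lemma det_neq0_potential_eq0 S (u v : nat -> R) : #|S| = N -> \det (struct_mx R S) != 0 ->
  (forall c, c \in cells S -> u c.1 + v c.2 = 0) ->
  forall i j, (i < m)%N -> (j < n)%N -> u i + v j = 0.
Proof.
move=> card_S Hdet Huv i j Hi Hj.
have unit_A : struct_mx R S \in unitmx by rewrite unitmxE unitfE.
have gA : potential u v *m struct_mx R S = 0.
  apply/matrixP => a k; rewrite (ord1 a) [RHS]mxE.
  transitivity (pairing (potential u v) (sth_cell S k).1 (sth_cell S k).2).
    by rewrite /pairing !mxE; apply: eq_bigr => s _; rewrite struct_mxE.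
  by rewrite pairing_potential // Huv ?sth_cell_in.
have g0 : potential u v = 0 by rewrite -(mulmxK unit_A (potential u v)) gA mul0mx.
by rewrite -pairing_potential // g0 /pairing mul0mx mxE.
Qed.

Section Circuit.
Variables (x0 : cell) (c : seq cell).
Hypothesis circuit_c : is_circuit x0 c.

Local Notation s := (size c).
Local Notation nt k := (nth x0 c k).
Local Notation succ k := ((k + 1) %% s)%N.

Definition row_step k := (nt k).1 == (nt (succ k)).1.

Lemma size_circuit_gt0 : (0 < s)%N.
Proof. by case: circuit_c => Hs _; lia. Qed.

Lemma circuit_col_step k : (k < s)%N -> ~~ row_step k -> (nt k).2 == (nt (succ k)).2.
Proof.
case: circuit_c => _ [_ Hc] Hk; have [/andP [_ Hadj] _] := Hc k Hk.
by rewrite /row_step; case/orP: Hadj => ->.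
Qed.

Lemma circuit_alternate k : (k < s)%N -> row_step (succ k) = ~~ row_step k.
Proof.
case: circuit_c => _ [_ Hc] Hk; have [_ [Hrow Hcol]] := Hc k Hk.
have succ2 : succ (succ k) = ((k + 2) %% s)%N by rewrite modnDml -addnA.
have lt_succ : (succ k < s)%N by rewrite ltn_mod size_circuit_gt0.
have [Hr|Hr] := boolP (row_step k); apply/negP.
  by move=> Hr1; move: Hrow; rewrite -succ2 -(eqP Hr1) (eqP Hr) eqxx.
move=> /negP/(circuit_col_step lt_succ)/eqP Hc1.
by move: Hcol; rewrite -succ2 -Hc1 (eqP (circuit_col_step Hk Hr)) eqxx.
Qed.

Definition circuit_sign (k : 'I_s) : R := if row_step k then 1 else -1.

Lemma circuit_balanced : balanced (place circuit_sign (fun k : 'I_s => nt k)).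
Proof.
have signE (F : nat -> R) (k : 'I_s) : circuit_sign k * F k =
    (if row_step k then F k else 0) - (if ~~ row_step k then F k else 0).
  by rewrite /circuit_sign; case: (row_step k); rewrite ?mul1r ?mulN1r ?subr0 ?sub0r.
have s0 := size_circuit_gt0.
split=> [i|j].
  rewrite row_sum_place (eq_bigr _ (fun k _ => signE (fun k => ((nt k).1 == i)%:R) k)).
  rewrite sumrB (sum_rot (fun k => if ~~ row_step k then ((nt k).1 == i)%:R else 0)) // -sumrB.
  rewrite big1 // => k _; rewrite circuit_alternate // negbK.
  by case: (boolP (row_step k)) => Hr; rewrite ?subrr // (eqP Hr) subrr.
rewrite col_sum_place (eq_bigr _ (fun k _ => signE (fun k => ((nt k).2 == j)%:R) k)).
rewrite sumrB (sum_rot (fun k => if row_step k then ((nt k).2 == j)%:R else 0)) // -sumrB.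
rewrite big1 // => k _; rewrite circuit_alternate //.
case: (boolP (row_step k)) => Hr; first by rewrite subrr.
by rewrite (eqP (circuit_col_step (ltn_ord k) Hr)) subrr.
Qed.

Lemma circuit_not_independent T : all (mem T) c -> ~ independent T.
Proof.
move=> cT Hind; case: circuit_c => _ [c_uniq _].
have nt_inj : injective (fun k : 'I_s => nt k).
  by move=> k k' /eqP; rewrite nth_uniq // => /eqP/val_inj.
have Hsupp : supp (place circuit_sign (fun k : 'I_s => nt k)) \subset T.
  by apply: supp_place => k; apply: (allP cT); apply: mem_nth.
have := place_at circuit_sign (Ordinal size_circuit_gt0) nt_inj.
rewrite (Hind _ Hsupp circuit_balanced) mxE /circuit_sign.
by case: (row_step _) => /eqP; rewrite eq_sym ?oppr_eq0 oner_eq0.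
Qed.

End Circuit.

Section ClosedSubset.
Variables (T C : {set cell}).
Hypothesis C_closed : forall d e, d \in C -> e \in T -> adjacent d e -> e \in C.

Definition row_indicator (i : nat) : R := [exists d in C, (d.1 : nat) == i]%:R.
Definition col_indicator (j : nat) : R := [exists d in C, (d.2 : nat) == j]%:R.

Lemma row_indicator_cell e : e \in T -> row_indicator e.1 = (e \in C)%:R.
Proof.
move=> eT; congr ((nat_of_bool _)%:R); apply/existsP/idP => [[d /andP [dC /eqP Ed]]|eC].
  have [<-//|ne_de] := eqVneq d e; apply: C_closed dC eT _.
  by rewrite /adjacent ne_de (val_inj Ed) eqxx.
by exists e; rewrite eC eqxx.
Qed.

Lemma col_indicator_cell e : e \in T -> col_indicator e.2 = (e \in C)%:R.
Proof.
move=> eT; congr ((nat_of_bool _)%:R); apply/existsP/idP => [[d /andP [dC /eqP Ed]]|eC].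
  have [<-//|ne_de] := eqVneq d e; apply: C_closed dC eT _.
  by rewrite /adjacent ne_de (val_inj Ed) eqxx orbT.
by exists e; rewrite eC eqxx.
Qed.

End ClosedSubset.

Lemma det_neq0_connected S : #|S| = N -> \det (struct_mx R S) != 0 -> connected_set (cells S).
Proof.
move=> card_S Hdet a b aS bS; set T := cells S in aS bS *.
set e := [rel u v | [&& u \in T, v \in T & adjacent u v]].
pose C := [set d in T | connect e a d].
have C_closed d d' : d \in C -> d' \in T -> adjacent d d' -> d' \in C.
  rewrite [d \in C]inE [d' \in C]inE => /andP [dT ad] d'T Hadj; rewrite d'T /=.
  by apply: connect_trans ad (connect1 _); rewrite /= dT d'T Hadj.
have Hpot := det_neq0_potential_eq0
  (u := row_indicator C) (v := fun j => - col_indicator C j) card_S Hdet.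
have : row_indicator C a.1 - col_indicator C b.2 = 0.
  apply: Hpot (ltn_ord a.1) (ltn_ord b.2) => d dT.
  by rewrite (row_indicator_cell C_closed) ?(col_indicator_cell C_closed) ?subrr.
rewrite (row_indicator_cell C_closed) ?(col_indicator_cell C_closed) // => /eqP.
rewrite subr_eq0 [a \in C]inE [b \in C]inE aS bS connect0 /=.
by rewrite eq_sym pnatr_eq1; case: connect.
Qed.

Lemma det_neq0_tree S : #|S| = N -> \det (struct_mx R S) != 0 -> is_tree (cells S).
Proof.
move=> card_S Hdet; split; first exact: det_neq0_connected.
case=> x0 [c [Hc cS]]; apply: (circuit_not_independent Hc cS).
by apply/det_neq0_independent.
Qed.

Lemma independent_card T : independent T -> (#|T| <= N)%N.
Proof.
move=> Hind; rewrite leqNgt; apply/negP => HT.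
have [a [[l al_neq0] Ha]] := exists_linear_dependence
  (fun l : 'I_#|T| => struct_col (enum_val l).1 (enum_val l).2) HT.
have Hw : place a (@enum_val _ (mem T)) = 0.
  apply: Hind; first by apply: supp_place => l'; apply: enum_valP.
  by apply/margins_eq0; rewrite margins_place.
by move: al_neq0; rewrite -(place_at a l (@enum_val_inj _ _)) Hw mxE eqxx.
Qed.

Lemma balanced_pairing w g : balanced w -> \sum_i \sum_j w i j * pairing g i j = 0.
Proof.
move=> Hw; under eq_bigr do under eq_bigr do rewrite pairingE.
exact: (balanced_potential
  (fun i => (if (i < m - 1)%N then oget (g 0) i else 0) + oget (g 0) (m - 1))
  (fun j => if (j < n - 1)%N then oget (g 0) (m + j) else 0) Hw).
Qed.

Lemma independent_extend1 T : independent T -> (#|T| < N)%N ->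
  exists2 c, c \notin T & independent (c |: T).
Proof.
move=> Hind HT.
have [g g_neq0 Hg] := exists_common_annihilator
  (fun l : 'I_#|T| => struct_col (enum_val l).1 (enum_val l).2) HT.
have gT d : d \in T -> pairing g d.1 d.2 = 0.
  by move=> dT; rewrite /pairing -(enum_rankK_in dT dT) Hg mxE.
have : ~~ [forall c : cell, pairing g c.1 c.2 == 0].
  apply: contra g_neq0 => /forallP Hall; apply/eqP/pairing_eq0 => i j Hi Hj.
  by apply/eqP; apply: (Hall (Ordinal Hi, Ordinal Hj)).
rewrite negb_forall => /existsP [c gc]; exists c.
  by apply: contra gc => /gT ->.
move=> w HwcT Hw.
have wc : w c.1 c.2 = 0.
  have := balanced_pairing g Hw; rewrite pair_bigA /= (bigD1 c) //= big1 ?addr0.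
    by move/eqP; rewrite mulf_eq0 (negbTE gc) orbF => /eqP.
  move=> d ne_dc; have [dT|dT] := boolP (d \in T); first by rewrite gT ?mulr0.
  by rewrite (supp_sub_cells HwcT) ?mul0r // !inE negb_or ne_dc.
apply: Hind Hw; apply/subsetP => d dw; have := subsetP HwcT d dw.
by rewrite !inE => /orP [/eqP Edc|//]; move: dw; rewrite inE Edc wc eqxx.
Qed.

Lemma independent_extend T : independent T ->
  exists2 T' : {set cell}, T \subset T' & independent T' /\ #|T'| = N.
Proof.
move Hk: (N - #|T|)%N => k; elim: k T Hk => [|k IH] T Hk Hind.
  by exists T => //; split=> //; apply/eqP; rewrite eqn_leq independent_card // -subn_eq0 Hk.
have [|c cT Hc] := independent_extend1 Hind; first by rewrite -subn_gt0 Hk.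
have [|T' sub_cT HT'] := IH (c |: T) _ Hc; first by rewrite cardsU1 cT add1n; lia.
by exists T' => //; apply: subset_trans sub_cT; apply: subsetUr.
Qed.

(* Rows and columns are the two vertex classes of a bipartite graph whose edges are the cells. *)
Definition vertex := ('I_m + 'I_n)%type.

Definition joins (c : cell) (a b : vertex) : Prop :=
  (inl c.1 = a \/ inl c.1 = b) /\ (inr c.2 = a \/ inr c.2 = b).

Lemma joins_sym c a b : joins c a b -> joins c b a.
Proof. by case=> [[H1|H1] [H2|H2]]; split; by [left | right]. Qed.

Lemma joins_inj c c' a b : joins c a b -> joins c' a b -> c = c'.
Proof.
case: c c' => i j [i' j'] [/= H1 H2] [/= H3 H4].
by case: H1 => H1; case: H2 => H2; case: H3 => H3; case: H4 => H4; congruence.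
Qed.

Lemma joins_ends c a b a' b' : joins c a b -> joins c a' b' ->
  (a = a' \/ a = b') /\ (b = a' \/ b = b').
Proof.
case=> H1 H2 [H3 H4]; case: H1 => H1; case: H2 => H2; case: H3 => H3; case: H4 => H4;
  split; first [left; congruence | right; congruence].
Qed.

Lemma joins_chain (c0 c1 c2 : cell) (z0 z1 z2 z3 : vertex) :
  joins c0 z0 z1 -> joins c1 z1 z2 -> joins c2 z2 z3 ->
  z0 <> z2 -> z0 <> z3 -> z1 <> z3 ->
  adjacent c0 c1 /\ c2.1 != c0.1 /\ c2.2 != c0.2.
Proof.
move=> [H1 H2] [H3 H4] [H5 H6] n02 n03 n13.
have n12 : z1 <> z2 by move=> E; case: H3 => H3; case: H4 => H4; congruence.
split; [|split].
- apply/andP; split.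
    apply/eqP => E; subst c1.
    by case: H1 => H1; case: H2 => H2; case: H3 => H3; case: H4 => H4; congruence.
  by case: H1 => H1; case: H2 => H2; case: H3 => H3; case: H4 => H4;
    first [apply/orP; left; apply/eqP; congruence
          | apply/orP; right; apply/eqP; congruence
          | exfalso; congruence].
- by apply/eqP => E; case: H1 => H1; case: H5 => H5; congruence.
- by apply/eqP => E; case: H2 => H2; case: H6 => H6; congruence.
Qed.

Lemma cycle_circuit (x0 : cell) s (y : nat -> cell) (z : nat -> vertex) : (4 <= s)%N ->
  (forall i j, z i = z j -> (i %% s = j %% s)%N) -> (forall i, y (i %% s)%N = y i) ->
  (forall i, joins (y i) (z i) (z i.+1)) -> is_circuit x0 (mkseq y s).
Proof.
move=> s4 z_inj y_per yz.
have z_ne k d e : (d < e < 4)%N -> z (k + d)%N <> z (k + e)%N.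
  by move=> /andP [lt_de lt_e4] /z_inj /mod_addl_inj; lia.
have y_inj i j : y i = y j -> (i %% s = j %% s)%N.
  move=> Eij; have yj : joins (y i) (z j) (z j.+1) by rewrite Eij.
  have [Ha Hb] := joins_ends (yz i) yj.
  case: Ha => /z_inj Ha; first by [].
  case: Hb => /z_inj Hb; last first.
    by move: Hb; rewrite -[i.+1]addn1 -[j.+1]addn1 => /eqP; rewrite eqn_modDr => /eqP.
  exfalso; rewrite -[i.+1]addn1 -[j.+1]addn1 in Ha Hb.
  have : ((j + 2) %% s = (j + 0) %% s)%N.
    have -> : ((j + 2) %% s = ((j + 1) %% s + 1) %% s)%N by rewrite modnDml -addnA.
    by rewrite -Ha modnDml Hb addn0.
  by move/mod_addl_inj; lia.
have nth_y k : nth x0 (mkseq y s) (k %% s) = y k by rewrite nth_mkseq ?ltn_mod ?y_per //; lia.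
split; first by rewrite size_mkseq.
split.
  rewrite map_inj_in_uniq ?iota_uniq // => i j; rewrite !mem_iota /= => Hi Hj /y_inj.
  by rewrite !modn_small.
rewrite size_mkseq => k Hk; rewrite -[in nth _ _ k](modn_small Hk) !nth_y addn1 addn2.
apply: (joins_chain (yz k) (yz k.+1) (yz k.+2)).
- by have := z_ne k 0 2 isT; rewrite addn0 addn2.
- by have := z_ne k 0 3 isT; rewrite addn0 addn3.
- by have := z_ne k 1 3 isT; rewrite addn1 addn3.
Qed.

Lemma walk_circuit (U : {set cell}) (x : nat -> cell) (v : nat -> vertex) :
  (forall k, x k \in U) -> (forall k, x k.+1 != x k) ->
  (forall k, joins (x k) (v k) (v k.+1)) -> (forall i j, v i = v j -> odd i = odd j) ->
  exists x0 cs, is_circuit x0 cs /\ all (mem U) cs.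
Proof.
move=> xU x_step xv v_odd.
have [a [b [lt_ab v_ab v_first]]] := first_repeat v.
set s := (b - a)%N; have s0 : (0 < s)%N by rewrite subn_gt0.
pose z i := v (a + i %% s)%N; pose y i := x (a + i %% s)%N.
have z_inj i j : z i = z j -> (i %% s = j %% s)%N.
  have := ltn_pmod i s0; have := ltn_pmod j s0.
  case: (ltngtP (i %% s) (j %% s)) => // H Hj Hi Ez; exfalso.
    by move/eqP: Ez; apply/negP; apply: v_first; rewrite ltn_add2l H /=; lia.
  by move/eqP: (esym Ez); apply/negP; apply: v_first; rewrite ltn_add2l H /=; lia.
have z_succ i : v (a + i %% s).+1 = z i.+1.
  rewrite /z -[i.+1]addn1 -modnDml addn1 -addnS.
  have := ltn_pmod i s0; rewrite leq_eqVlt.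
  case/orP => [/eqP Hlast|Hlt]; last by rewrite (modn_small Hlt).
  by rewrite Hlast modnn addn0 /s subnKC ?(ltnW lt_ab).
have yz i : joins (y i) (z i) (z i.+1) by rewrite -z_succ; apply: xv.
have s_even : ~~ odd s by rewrite /s oddB ?(ltnW lt_ab) // (v_odd _ _ v_ab) addbb.
have s_ne2 : s != 2%N.
  (* two distinct cells cannot join the same pair of vertices *)
  apply/eqP => s2; move: (x_step a); apply/negP; rewrite negbK.
  have z20 : z 2%N = z 0%N by rewrite /z s2.
  have y1 := joins_sym (yz 1%N); rewrite z20 in y1.
  by have := joins_inj (yz 0%N) y1; rewrite /y s2 /= addn0 addn1 => ->.
have s4 : (4 <= s)%N.
  rewrite leqNgt; apply/negP => lt_s4.
  have : (s == 1%N) || (s == 3%N) by lia.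
  by case/orP => /eqP Hs; move: s_even; rewrite Hs.
exists (x a), (mkseq y s); split.
  by apply: (cycle_circuit _ s4 z_inj _ yz) => i; rewrite /y modn_mod.
by apply/allP => c /mapP [i _ ->]; apply: xU.
Qed.

Fixpoint zigzag (f g : cell -> cell) (c0 : cell) (k : nat) : cell :=
  if k is k'.+1 then (if odd k' then f else g) (zigzag f g c0 k') else c0.

Lemma acyclic_independent T :
  ~ (exists x0 c, is_circuit x0 c /\ all (mem T) c) -> independent T.
Proof.
move=> acyclic w wT [Hr Hc]; apply/eqP; apply: contraT => /matrix0Pn [i [j wij]].
exfalso; apply: acyclic; set U := supp w.
pose along_row c := odflt c [pick c' in U | (c' != c) && (c'.1 == c.1)].
pose along_col c := odflt c [pick c' in U | (c' != c) && (c'.2 == c.2)].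
have row_next c : c \in U -> [/\ along_row c \in U, along_row c != c & (along_row c).1 = c.1].
  rewrite inE => wc; rewrite /along_row; case: pickP => [c' /and3P [-> -> /eqP //]|none].
  have [j' ne_j wj'] := sum0_other_neq0 (Hr c.1) wc; have := none (c.1, j').
  by rewrite inE wj' /= eqxx andbT; case: eqP => // Ec; rewrite -Ec eqxx in ne_j.
have col_next c : c \in U -> [/\ along_col c \in U, along_col c != c & (along_col c).2 = c.2].
  rewrite inE => wc; rewrite /along_col; case: pickP => [c' /and3P [-> -> /eqP //]|none].
  have [i' ne_i wi'] := sum0_other_neq0 (Hc c.2) wc; have := none (i', c.2).
  by rewrite inE wi' /= eqxx andbT; case: eqP => // Ec; rewrite -Ec eqxx in ne_i.
pose x := zigzag along_row along_col (i, j).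
pose v k : vertex := if odd k then inr (x k).2 else inl (x k).1.
have xU k : x k \in U.
  elim: k => [|k IH]; first by rewrite inE.
  by rewrite /x /=; case: (odd k); [case: (row_next _ IH) | case: (col_next _ IH)].
have x_step k : x k.+1 != x k.
  by rewrite /x /=; case: (odd k); [case: (row_next _ (xU k)) | case: (col_next _ (xU k))].
have xv k : joins (x k) (v k) (v k.+1).
  rewrite /v /= /x /=; case Ek: (odd k) => /=.
    by case: (row_next _ (xU k)) => _ _ ->; split; [right | left].
  by case: (col_next _ (xU k)) => _ _ ->; split; [left | right].
have v_odd i' j' : v i' = v j' -> odd i' = odd j'.
  by rewrite /v; case: (odd i'); case: (odd j').
have [x0 [cs [Hcs csU]]] := walk_circuit xU x_step xv v_odd.
exists x0, cs; split=> //; apply/allP => c /(allP csU); apply: (subsetP wT).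
Qed.

Lemma tree_independent T : is_tree T -> independent T.
Proof. by case=> _; apply: acyclic_independent. Qed.

Lemma PS_embed p q S : PS p q S = embed S (xvec p q S).
Proof. by []. Qed.

Lemma row_sum_PS p q S : \sum_i p i = 1 -> \sum_j q j = 1 ->
  \det (struct_mx R S) != 0 -> row_sum (PS p q S) =1 p /\ col_sum (PS p q S) =1 q.
Proof.
move=> Hp Hq Hdet; apply/margins_yvec => //.
by rewrite PS_embed -struct_mx_mul /xvec mulKVmx // unitmxE unitfE.
Qed.

Lemma admissible_of_independent p q T P : probvec p -> probvec q ->
  independent T -> #|T| = N -> transport p q P -> supp P \subset T ->
  admissible p q (codes T) /\ P = PS p q (codes T).
Proof.
move=> [_ Hp] [_ Hq] Hind card_T [HP0 [HPr HPc]] PT; set S := codes T.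
have card_S : #|S| = N by rewrite card_codes.
have cells_S : cells S = T by rewrite cells_codes.
have Hdet : \det (struct_mx R S) != 0 by apply/det_neq0_independent; rewrite ?cells_S.
have [Hr Hc] := row_sum_PS Hp Hq Hdet.
have HP : P = PS p q S.
  apply: (independent_eq Hind) => //; first by rewrite -cells_S; apply: supp_embed.
    by move=> i; rewrite Hr; apply: HPr.
  by move=> j; rewrite Hc; apply: HPc.
do !split=> //.
  by move=> k; rewrite -(embed_at _ k card_S) -PS_embed -HP.
rewrite -(sum_row_sum_place (fun k => xvec p q S k ord0) (sth_cell S)) -embed_place.
by rewrite -PS_embed -HP -Hp; apply: eq_bigr => i _; apply: HPr.
Qed.

Lemma admissible_tree_transport p q S : probvec p -> probvec q ->
  admissible p q S -> tree_transport p q (PS p q S).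
Proof.
move=> [_ Hp] [_ Hq] [card_S [Hdet [Hx0 _]]]; have [Hr Hc] := row_sum_PS Hp Hq Hdet.
split; first by split; [move=> i j; rewrite mxE sumr_ge0 | split].
exists (cells S); split; first exact: det_neq0_tree.
by rewrite card_cells card_S PS_embed supp_embed.
Qed.

Lemma independent_supp_admissible p q P : probvec p -> probvec q ->
  transport p q P -> independent (supp P) -> exists S, admissible p q S /\ P = PS p q S.
Proof.
move=> Hp Hq HP Hind; have [T PT [HindT card_T]] := independent_extend Hind.
by exists (codes T); apply: admissible_of_independent.
Qed.

Lemma tree_transport_admissible p q P : probvec p -> probvec q ->
  tree_transport p q P -> exists S, admissible p q S /\ P = PS p q S.
Proof.
move=> Hp Hq [HP [T [HT [card_T PT]]]].
by exists (codes T); apply: admissible_of_independent => //; apply: tree_independent.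
Qed.

Lemma transport_shift p q P w : transport p q P -> balanced w -> w != 0 -> supp w \subset supp P ->
  exists2 t, 0 < t & transport p q (P + t *: w) /\ (#|supp (P + t *: w)| < #|supp P|)%N.
Proof.
move=> HP Hw w_neq0 wP; have HP0 := HP.1.
have [c1 w_c1] : exists c : cell, w c.1 c.2 < 0.
  have /matrix0Pn [i [j wij]] := w_neq0.
  by have [j' wj'] := sum0_exists_neg (Hw.1 i) wij; exists (i, j').
have [c [w_c c_min]] := exists_argmin (P := fun c : cell => w c.1 c.2 < 0)
  (fun c : cell => P c.1 c.2 / - w c.1 c.2) (ex_intro _ c1 w_c1).
set t := P c.1 c.2 / - w c.1 c.2 in c_min *.
have P_c : 0 < P c.1 c.2.
  rewrite lt0r HP0 andbT; have : c \in supp w by rewrite inE lt_eqF.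
  by move/(subsetP wP); rewrite inE.
have t_gt0 : 0 < t by rewrite divr_gt0 // oppr_gt0.
exists t => //; split.
  apply: transport_add_balanced => //; first exact: balancedZ.
  move=> i j; rewrite mxE; have := HP0 i j; case: (ltP (w i j) 0) => w_ij P_ij; last by nra.
  by have := c_min (i, j) w_ij; rewrite /= ler_pdivlMr ?oppr_gt0 //; nra.
apply: proper_card; apply/properP; split.
  apply/subsetP => d; rewrite inE [d \in supp P]inE; apply: contraNN => /eqP P_d.
  have w_d : w d.1 d.2 = 0 by apply: (supp_sub_cells wP); rewrite inE P_d eqxx.
  by rewrite !mxE P_d w_d mulr0 addr0.
exists c; first by rewrite inE lt0r_neq0.
by rewrite inE !mxE negbK /t; apply/eqP; field; rewrite lt_eqF.
Qed.

Lemma transport_split p q P w : transport p q P -> balanced w -> w != 0 -> supp w \subset supp P ->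
  exists A B, [/\ transport p q A, transport p q B, A != B,
    (#|supp A| < #|supp P|)%N && (#|supp B| < #|supp P|)%N
    & exists2 l, 0 < l < 1 & P = l *: A + (1 - l) *: B].
Proof.
move=> HP Hw w_neq0 wP.
have [t1 t1_gt0 [HA suppA]] := transport_shift HP Hw w_neq0 wP.
have Hw' : balanced (- w) by rewrite -scaleN1r; apply: balancedZ.
have w'P : supp (- w) \subset supp P.
  by apply/subsetP => c; rewrite inE mxE oppr_eq0 => wc; apply: (subsetP wP); rewrite inE.
have [t2 t2_gt0 [HB suppB]] := transport_shift HP Hw' (ltac:(by rewrite oppr_eq0)) w'P.
exists (P + t1 *: w), (P + t2 *: - w); split=> //.
- apply: contra w_neq0 => /eqP E; apply/eqP/matrixP => i j.
  have := congr1 (fun M : 'M[R]_(m, n) => M i j) E; rewrite /= !mxE => Eij.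
  have : (t1 + t2) * w i j = 0 by lra.
  by move/eqP; rewrite mulf_eq0 => /orP [/eqP|/eqP //]; lra.
- by rewrite suppA suppB.
exists (t2 / (t1 + t2)).
  by apply/andP; split; [rewrite divr_gt0 // | rewrite ltr_pdivrMr]; lra.
by apply/matrixP => i j; rewrite !mxE; field; lra.
Qed.

Lemma extreme_independent p q P : extreme_transport p q P -> independent (supp P).
Proof.
move=> [HP Hext] w wP Hw; apply/eqP; apply: contraT => w_neq0.
have [A [B [HA HB AB _ [l /andP [l_gt0 l_lt1] HPl]]]] := transport_split HP Hw w_neq0 wP.
by rewrite (Hext A B l) ?eqxx in AB.
Qed.

Lemma supp_convex_sub A B t : 0 < t -> t < 1 ->
  (forall i j, 0 <= A i j) -> (forall i j, 0 <= B i j) ->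
  supp A \subset supp (t *: A + (1 - t) *: B).
Proof.
move=> t_gt0 t_lt1 A_ge0 B_ge0; apply/subsetP => c; rewrite !inE !mxE => A_c.
have A_c_gt0 : 0 < A c.1 c.2 by rewrite lt0r A_c A_ge0.
have := B_ge0 c.1 c.2; rewrite -(subr_gt0 t) in t_lt1 => B_c.
by rewrite lt0r_neq0 // ltr_pwDl ?mulr_gt0 ?mulr_ge0 // ltW.
Qed.

Lemma tree_extreme p q P : tree_transport p q P -> extreme_transport p q P.
Proof.
move=> [HP [T [HT [_ PT]]]]; split=> // A B t HA HB t_gt0 t_lt1 HPAB.
have [[A_ge0 [HAr HAc]] [B_ge0 [HBr HBc]]] := (HA, HB).
apply: (independent_eq (tree_independent HT)).
- by apply: (subset_trans _ PT); rewrite HPAB; apply: supp_convex_sub.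
- apply: (subset_trans _ PT).
  have -> : P = (1 - t) *: B + (1 - (1 - t)) *: A by rewrite HPAB subKr addrC.
  by apply: supp_convex_sub => //; lra.
- by move=> i; rewrite /row_sum HAr HBr.
- by move=> j; rewrite /col_sum HAc HBc.
Qed.

Lemma concave_min_admissible p q H : probvec p -> probvec q -> strictly_concave_on p q H ->
  forall P, transport p q P -> exists S, admissible p q S /\ H (PS p q S) <= H P.
Proof.
move=> Hp Hq Hconc P HP; move Hk: #|supp P| => k.
elim/ltn_ind: k P HP Hk => k IH P HP Hk.
have [[w [wP Hw w_neq0]]|none] :=
  pselect (exists w, [/\ supp w \subset supp P, balanced w & w != 0]).
  have [A [B [HA HB AB /andP [sA sB] [l /andP [l_gt0 l_lt1] HPl]]]] :=
    transport_split HP Hw w_neq0 wP.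
  have [SA [HSA HA_SA]] := IH #|supp A| (ltac:(by rewrite -Hk)) A HA erefl.
  have [SB [HSB HB_SB]] := IH #|supp B| (ltac:(by rewrite -Hk)) B HB erefl.
  have := Hconc A B l HA HB AB l_gt0 l_lt1; rewrite -HPl => HP_gt.
  by case: (lerP (H A) (H B)) => HAB; [exists SA | exists SB]; split=> //; nra.
have Hind : independent (supp P).
  by move=> w wP Hw; apply/eqP; apply: contraT => w_neq0; case: none; exists w.
by have [S [HS ->]] := independent_supp_admissible Hp Hq HP Hind; exists S.
Qed.

Lemma exists_concave_minimizer p q H : probvec p -> probvec q -> strictly_concave_on p q H ->
  exists S, admissible p q S /\ forall P, transport p q P -> H (PS p q S) <= H P.
Proof.
move=> Hp Hq Hconc.
have [S0 [HS0 _]] := concave_min_admissible Hp Hq Hconc (prod_coupling_transport Hp Hq).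
have [S [HS S_min]] := exists_argmin (fun S => H (PS p q S)) (ex_intro _ S0 HS0).
exists S; split=> // P HP; have [S' [HS' HS'_P]] := concave_min_admissible Hp Hq Hconc HP.
exact: le_trans (S_min _ HS') HS'_P.
Qed.

Lemma extreme_iff_tree p q P : probvec p -> probvec q ->
  extreme_transport p q P <-> tree_transport p q P.
Proof.
move=> Hp Hq; split=> [Hext|]; last exact: tree_extreme.
have [S [HS ->]] := independent_supp_admissible Hp Hq Hext.1 (extreme_independent Hext).
exact: admissible_tree_transport.
Qed.

Lemma tree_iff_admissible p q P : probvec p -> probvec q ->
  tree_transport p q P <-> exists S, admissible p q S /\ P = PS p q S.
Proof.
move=> Hp Hq; split; first exact: tree_transport_admissible.
by case=> S [HS ->]; apply: admissible_tree_transport.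
Qed.

End TransportPolytope.

Theorem theorem3p2 (R : realType) (m n : nat) (p : 'I_m -> R) (q : 'I_n -> R) :
  (2 <= m)%N -> (2 <= n)%N ->
  probvec p -> probvec q ->
  (forall i, 0 < p i) -> (forall j, 0 < q j) ->
  [/\ (forall P, extreme_transport p q P <-> tree_transport p q P),
      (forall P, tree_transport p q P <->
                 exists S : {set 'I_(m * n)}, admissible p q S /\ P = PS p q S)
    & forall H : 'M[R]_(m, n) -> R, strictly_concave_on p q H ->
      (exists P0, tree_transport p q P0 /\
                  forall P, transport p q P -> H P0 <= H P) /\
      (exists S, admissible p q S /\
                  forall P, transport p q P -> H (PS p q S) <= H P)].
Proof.
move=> m2 n2 Hp Hq _ _; split=> [P|P|H Hconc].
- exact: extreme_iff_tree.
- exact: tree_iff_admissible.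
have [S [HS S_min]] := exists_concave_minimizer m2 n2 Hp Hq Hconc.
split; last by exists S.
by exists (PS p q S); split=> //; apply: admissible_tree_transport.
Qed.
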